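(* Let $\mathcal N$ be a ground set with $|\mathcal N|=n$, $f:2^{\mathcal N}\to\mathbb R$ monotone submodular, $k\ge1$ an integer, $0<\epsilon<1/2$, and $O$ an optimal solution of size $k$ to $\max\{f(S):|S|\le k\}$. Suppose $\textsc{LowAdapLinearSeq}(f,\mathcal N,k,\epsilon)$ (described in the context) terminates successfully, and let $A$ and $V$ be the final values of the sets $A$ and $V$ maintained by the algorithm. Then $f(O\setminus V)\le2f(A)$.
   Context: $f$ is submodular if $f(T\cup\{x\})-f(T)\le f(S\cup\{x\})-f(S)$ for all $S\subseteq T\subseteq\mathcal N$, $x\notin T$; monotone if $f(S)\le f(T)$ for $S\subseteq T$. $\Delta(x\mid S)=f(S\cup\{x\})-f(S)$, $\Delta(T\mid S)=f(S\cup T)-f(S)$. $\log$ is natural log. Algorithm $\textsc{LowAdapLinearSeq}(f,\mathcal N,k,\epsilon)$: Let $a=\arg\max_{u\in\mathcal N}f(\{u\})$; $A\leftarrow\{a\}$, $V\leftarrow\mathcal N$, $\beta=\epsilon/(16\log(8/(1-e^{-\epsilon/2})))$, $\ell=\lceil4(1+1/(\beta\epsilon))\log(n/k)\rceil$. For $j=1,\dots,\ell$: (i) $V\leftarrow\{x\in V:\Delta(x\mid A)\ge f(A)/k\}$; (ii) if $|V|\le k$, break; (iii) let $(v_1,\dots,v_{|V|})$ be a uniformly random permutation of $V$; (iv) $\Lambda=\{\lfloor(1+\epsilon)^u\rfloor:1\le\lfloor(1+\epsilon)^u\rfloor\le k,u\in\mathbb N\}\cup\{\lfloor k+u\epsilon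 k\rfloor:\lfloor k+u\epsilon k\rfloor\le|V|,u\in\mathbb N\}\cup\{|V|\}$ with elements $\lambda_1<\lambda_2<\cdots$, $\lambda_0=0$, $T_\lambda=\{v_1,\dots,v_\lambda\}$, $T'_{\lambda_i}=T_{\lambda_i}\setminus T_{\lambda_{i-1}}$; (v) in parallel set $B[\lambda_i]=\text{true}$ iff $\Delta(T'_{\lambda_i}\mid A\cup T_{\lambda_{i-1}})/|T'_{\lambda_i}|\ge(1-\epsilon)f(A\cup T_{\lambda_{i-1}})/k$; (vi) $\lambda^*$ is the largest $\lambda_i\in\Lambda$ with $B[\lambda_i]=\text{false}$ and either ($\lambda_i\le k$ and $B[\lambda_1],\dots,B[\lambda_{i-1}]$ all true) or ($\lambda_i>k$ and some $m\ge1$ has $|\bigcup_{u=m}^{i-1}T'_{\lambda_u}|\ge k$ and $B[\lambda_m],\dots,B[\lambda_{i-1}]$ all true); (vii) $A\leftarrow A\cup T_{\lambda^*}$. After the loop: if $|V|>k$ return failure; otherwise (successful termination) let $A'$ be the last $k$ elements added to $A$ and return $\arg\max\{f(A'),f(V)\}$. *)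

From HB Require Import structures.
From mathcomp Require Import all_boot all_order all_algebra.
From mathcomp Require Import boolp reals sequences exp.
Set Implicit Arguments. Unset Strict Implicit. Unset Printing Implicit Defensive.
Import Order.TTheory GRing.Theory Num.Theory.
Local Open Scope ring_scope.

Section LowAdap.
Variables (R : realType) (T : finType).

Definition monotone_setfun (f : {set T} -> R) :=
  forall S U : {set T}, S \subset U -> f S <= f U.

Definition submodular (f : {set T} -> R) :=
  forall (S U : {set T}) (x : T), S \subset U -> x \notin U ->
    f (x |: U) - f U <= f (x |: S) - f S.

Definition Delta (f : {set T} -> R) (U S : {set T}) := f (S :|: U) - f S.

Variables (f : {set T} -> R) (k : nat) (eps : R).

Definition beta_par : R := eps / (16 * ln (8 / (1 - expR (- (eps / 2))))).
Definition ell_par : nat :=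
  absz (Num.ceil (4 * (1 + 1 / (beta_par * eps)) * ln (#|T|%:R / k%:R))).

(* Lambda, for a current candidate set of size s *)
Definition Lambda_mem (s m : nat) : Prop :=
  (exists u : nat, Num.floor ((1 + eps) ^+ u) = m%:Z /\ (1 <= m <= k)%N)
  \/ (exists u : nat, Num.floor (k%:R + u%:R * eps * k%:R) = m%:Z /\ (m <= s)%N)
  \/ m = s.
Definition inLambda (s m : nat) : bool := `[< Lambda_mem s m >].

(* predecessor of m in Lambda u {0} (i.e. lambda_{i-1} when m = lambda_i) *)
Definition prevL (s m : nat) : nat := \max_(i < m | inLambda s i) (i : nat).

Definition Tl (sq : seq T) (l : nat) : {set T} := [set x in take l sq].
Definition Tpl (sq : seq T) (l : nat) : {set T} :=
  Tl sq l :\: Tl sq (prevL (size sq) l).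

Definition Bval (A : {set T}) (sq : seq T) (l : nat) : bool :=
  let Tprev := Tl sq (prevL (size sq) l) in
  (1 - eps) * f (A :|: Tprev) / k%:R <=
    Delta f (Tpl sq l) (A :|: Tprev) / #|Tpl sq l|%:R.

Definition lam_cond (A : {set T}) (sq : seq T) (m : nat) : bool :=
  let s := size sq in
  [&& inLambda s m, ~~ Bval A sq m &
   ((m <= k)%N && [forall i : 'I_m, inLambda s i ==> Bval A sq i])
   || ((k < m)%N &&
       [exists mu : 'I_m, ((mu == 0%N :> nat) || inLambda s mu) &&
          (k <= #|\bigcup_(i < m | inLambda s i && (mu < i)%N) Tpl sq i|)%N &&
          [forall i : 'I_m, (inLambda s i && (mu < i)%N) ==> Bval A sq i]])].

(* lambda^* : the largest element satisfying the condition (0 if none exists) *)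
Definition lam_star (A : {set T}) (sq : seq T) : nat :=
  \max_(m < (size sq).+1 | lam_cond A sq m) (m : nat).

(* the main loop: j is the iteration counter, sigma j s is the (random)
   permutation of the sequence s chosen at iteration j *)
Fixpoint main_loop (sigma : nat -> seq T -> seq T) (fuel j : nat)
    (A V : {set T}) : {set T} * {set T} :=
  match fuel with
  | 0 => (A, V)
  | fuel'.+1 =>
      let V' := [set x in V | f A / k%:R <= Delta f [set x] A] in
      if (#|V'| <= k)%N then (A, V')
      else
        let sq := sigma j (enum V') in
        main_loop sigma fuel' j.+1 (A :|: Tl sq (lam_star A sq)) V'
  end.

(* final values (A, V) of a run, started with A = {a}, V = N;
   the run terminates successfully iff #|V| <= k at the end *)
Definition LowAdapLinearSeq_final (a : T) (sigma : nat -> seq T -> seq T)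
  : {set T} * {set T} :=
  main_loop sigma ell_par 1 [set a] [set: T].

End LowAdap.

From HB Require Import structures.
From mathcomp Require Import all_boot all_order all_algebra.
From mathcomp Require Import boolp reals sequences exp.
From mathcomp Require Import lra.
Set Implicit Arguments. Unset Strict Implicit. Unset Printing Implicit Defensive.
Import Order.TTheory GRing.Theory Num.Theory.
Local Open Scope ring_scope.

(* Every element removed from V had, at the time of its removal,
   marginal gain less than f(A)/k with respect to the then current A; since A
   only grows, submodularity keeps these gains below f(A)/k for the final A.
   Hence f(O \ V) <= f(A) + |O \ V| f(A)/k <= 2 f(A). *)

Section SubmodularGains.
Variables (R : realType) (T : finType) (f : {set T} -> R).
Hypotheses (f_mono : monotone_setfun f) (f_sub : submodular f).

Lemma Delta1_antimono (S U : {set T}) (x : T) :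
  S \subset U -> Delta f [set x] U <= Delta f [set x] S.
Proof.
move=> sSU; rewrite /Delta !(setUC _ [set x]).
case xU: (x \in U); last by apply: f_sub; rewrite ?xU.
rewrite (setUidPr _) ?sub1set // subrr subr_ge0.
exact/f_mono/subsetUr.
Qed.

Lemma Delta_le_sum (A S : {set T}) :
  Delta f S A <= \sum_(x in S) Delta f [set x] A.
Proof.
rewrite -big_enum -[S in Delta _ S]set_enum.
elim: (enum S) => [|x s IH].
  by rewrite big_nil set_nil /Delta setU0 subrr.
rewrite big_cons set_cons.
have -> : Delta f (x |: [set y in s]) A
    = Delta f [set x] (A :|: [set y in s]) + Delta f [set y in s] A.
  by rewrite /Delta setUA [A :|: [set x]]setUC -setUA [[set x] :|: _]setUC; lra.
by apply: lerD => //; apply/Delta1_antimono/subsetUl.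
Qed.

End SubmodularGains.

Section SmallGains.
Variables (R : realType) (T : finType) (f : {set T} -> R) (k : nat).

Definition small_gains (A V : {set T}) :=
  forall x, x \notin V -> Delta f [set x] A <= f A / k%:R.

Hypotheses (f_mono : monotone_setfun f) (f_sub : submodular f).

Lemma small_gains_subset (A A' V : {set T}) :
  A \subset A' -> small_gains A V -> small_gains A' V.
Proof.
move=> sAA' gA x xV; apply: le_trans (Delta1_antimono f_mono f_sub x sAA') _.
apply: le_trans (gA x xV) _.
by rewrite ler_wpM2r ?invr_ge0 ?ler0n //; apply: f_mono.
Qed.

Lemma small_gains_filter (A V : {set T}) :
  small_gains A V ->
  small_gains A [set x in V | f A / k%:R <= Delta f [set x] A].
Proof.
move=> gA x; rewrite inE negb_and => /orP[/gA // | ].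
by rewrite -ltNge => /ltW.
Qed.

Lemma main_loop_small_gains eps sigma fuel j (A V : {set T}) :
  small_gains A V ->
  small_gains (main_loop f k eps sigma fuel j A V).1
              (main_loop f k eps sigma fuel j A V).2.
Proof.
elim: fuel j A V => [|n IH] j A V gA //=.
move/small_gains_filter: gA; case: ifP => // _ gA.
by apply/IH/(small_gains_subset (subsetUl _ _)).
Qed.

Lemma small_gains_bound (A V S : {set T}) :
  (0 < k)%N -> 0 <= f A -> small_gains A V ->
  [disjoint S & V] -> (#|S| <= k)%N -> f S <= 2 * f A.
Proof.
move=> k_gt0 fA_ge0 gA dSV cardS.
have fS_le : f S <= f A + Delta f S A.
  by rewrite /Delta addrC subrK; apply/f_mono/subsetUr.
have gains_le : \sum_(x in S) Delta f [set x] A <= #|S|%:R * (f A / k%:R).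
  rewrite -sum1_card natr_sum big_distrl /=; apply: ler_sum => x xS.
  by rewrite mul1r; apply: gA; rewrite (disjointFr dSV).
have card_le : #|S|%:R * (f A / k%:R) <= f A.
  rewrite mulrA ler_pdivrMr ?ltr0n // mulrC.
  by apply: ler_wpM2l; rewrite ?ler_nat.
have := Delta_le_sum f_mono f_sub A S; lra.
Qed.

End SmallGains.

Theorem lemma15 (R : realType) (T : finType) (f : {set T} -> R) (k : nat)
    (eps : R) (O : {set T}) (a : T) (sigma : nat -> seq T -> seq T) :
  monotone_setfun f -> submodular f ->
  (forall S, 0 <= f S) ->
  (0 < k)%N -> 0 < eps -> eps < 1 / 2 ->
  #|O| = k -> (forall S : {set T}, (#|S| <= k)%N -> f S <= f O) ->
  (forall u : T, f [set u] <= f [set a]) ->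
  (forall (j : nat) (s : seq T), perm_eq (sigma j s) s) ->
  (#|(LowAdapLinearSeq_final f k eps a sigma).2| <= k)%N ->
  f (O :\: (LowAdapLinearSeq_final f k eps a sigma).2)
    <= 2 * f (LowAdapLinearSeq_final f k eps a sigma).1.
Proof.
move=> f_mono f_sub f_ge0 k_gt0 _ _ cardO _ _ _ _.
have gains_init : small_gains f k [set a] [set: T] by move=> x; rewrite inE.
have := main_loop_small_gains f_mono f_sub
  (eps := eps) (sigma := sigma) (fuel := ell_par T k eps) (j := 1) gains_init.
rewrite /LowAdapLinearSeq_final; case: main_loop => A V /= gA.
apply: (small_gains_bound f_mono f_sub k_gt0 (f_ge0 A) gA).
- by rewrite -setI_eq0 setIDAC setDIl setDv setI0.
- by rewrite -cardO subset_leq_card // subsetDl.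
Qed.
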